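(* $\textsc{SampHLF}\in(\textsc{Samp}\,\mathsf{NC}^0)^{\textsc{RelHLF}}$: there is a family of constant-depth bounded fan-in classical circuits with uniformly random input bits and oracle gates to any solver of $\textsc{RelHLF}$ which solves $\textsc{SampHLF}$ exactly.
   Context: An instance consists of the adjacency matrix $A\in\{0,1\}^{n\times n}$ of a simple undirected graph on $n$ vertices that is a subgraph of a 2D grid, and a vector $b\in\{0,1\}^n$. Consider the graph state $|G\rangle=2^{-n/2}\sum_x\prod_{(u,v)\in E}(-1)^{x_ux_v}|x\rangle$ of this graph, and measure qubit $i$ in the $X$ basis if $b_i=0$ and in the $Y$ basis if $b_i=1$ (equivalently apply $H$, resp. $HR_z$ with $R_z=\mathrm{diag}(1,i)$, and measure in the computational basis), giving an outcome string in $\{0,1\}^n$. $\textsc{RelHLF}$ (relation version of the 2D Hidden Linear Function problem): output any outcome string that occurs with nonzero probability. $\textsc{SampHLF}$ (sampling version): output a string distributed exactly according to the measurement outcome distribution. *)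

From HB Require Import structures.
From mathcomp Require Import all_boot all_order all_algebra all_field.
Set Implicit Arguments. Unset Strict Implicit. Unset Printing Implicit Defensive.
Import Order.TTheory GRing.Theory Num.Theory.
Local Open Scope ring_scope.

(* An instance of size N lives on the N x N grid: n = N*N vertices, vertex u
   has coordinates (u %/ N, u %% N). *)
Definition grid_adj (N : nat) (u v : nat) : bool :=
  ((u %/ N == v %/ N)%N && (((u %% N).+1 == v %% N)%N || ((v %% N).+1 == u %% N)%N))
  || ((u %% N == v %% N)%N && (((u %/ N).+1 == v %/ N)%N || ((v %/ N).+1 == u %/ N)%N)).

Definition adjmat (N : nat) := 'I_(N * N) -> 'I_(N * N) -> bool.
Definition bitvec (N : nat) := 'I_(N * N) -> bool.

Definition valid_instance (N : nat) (A : adjmat N) : Prop :=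
  (forall u v, A u v = A v u) /\ (forall u, A u u = false) /\
  (forall u v, A u v -> grid_adj N u v).

Definition b2o (x : bool) : 'I_2 := if x then ord_max else ord0.

Definition Hmx : 'M[algC]_2 := (sqrtC 2)^-1 *: \matrix_(i < 2, j < 2) (-1) ^+ (i * j)%N.
Definition Rzmx : 'M[algC]_2 := \matrix_(i < 2, j < 2) (if i == j then 'i ^+ i else 0).
(* basis change before computational-basis measurement: H (X basis) or H R_z (Y basis) *)
Definition Umx (bi : bool) : 'M[algC]_2 := if bi then Hmx *m Rzmx else Hmx.

(* amplitude <x|G> of the graph state *)
Definition graph_amp (N : nat) (A : adjmat N) (x : {ffun 'I_(N * N) -> bool}) : algC :=
  (sqrtC 2)^-1 ^+ (N * N) *
  \prod_(u : 'I_(N * N)) \prod_(v : 'I_(N * N) | (u < v)%N && A u v)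
     (-1) ^+ (x u && x v).

(* amplitude of outcome z after applying (x) U_{b_i} *)
Definition outcome_amp (N : nat) (A : adjmat N) (b z : bitvec N) : algC :=
  \sum_(x : {ffun 'I_(N * N) -> bool})
     (\prod_(u : 'I_(N * N)) Umx (b u) (b2o (z u)) (b2o (x u))) * graph_amp A x.

Definition outcome_prob (N : nat) (A : adjmat N) (b z : bitvec N) : algC :=
  `|outcome_amp A b z| ^+ 2.

Definition oracle := forall N : nat, adjmat N -> bitvec N -> bitvec N.

(* O solves RelHLF: on every valid instance it returns an outcome of nonzero probability
   (on invalid queries it may return anything). *)
Definition solves_RelHLF (O : oracle) : Prop :=
  forall N (A : adjmat N) (b : bitvec N), valid_instance A ->
    outcome_prob A b (O N A b) != 0.

(* Wires are indices into the list of all wire values: first the circuit inputs,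
   then the outputs of the gates in order. References to not-yet-computed wires
   read the constant false (depth 0). *)
Inductive gate : Type :=
| GBool of (bool -> bool -> bool) & nat & nat
| GOracle of nat & seq nat.                      (* RelHLF query of grid size N' *)

Record circuit := Circuit { nrand : nat; gates : seq gate; outs : seq nat }.

Definition n_of (N : nat) := (N * N)%N.

Definition decA (N : nat) (q : seq bool) : adjmat N :=
  fun u v => nth false q (u * n_of N + v).
Definition decb (N : nat) (q : seq bool) : bitvec N :=
  fun u => nth false q (n_of N * n_of N + u).

Definition gate_out (O : oracle) (vals : seq bool) (g : gate) : seq bool :=
  match g with
  | GBool f i j => [:: f (nth false vals i) (nth false vals j)]
  | GOracle N' ins =>
      let q := map (nth false vals) ins in
      [seq O N' (@decA N' q) (@decb N' q) i | i <- enum 'I_(N' * N')]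
  end.

Definition eval_wires (O : oracle) (inp : seq bool) (gs : seq gate) : seq bool :=
  foldl (fun vals g => vals ++ gate_out O vals g) inp gs.

Definition gate_depth (ds : seq nat) (g : gate) : seq nat :=
  match g with
  | GBool _ i j => [:: (maxn (nth 0 ds i) (nth 0 ds j)).+1]
  | GOracle N' ins => nseq (N' * N') (\max_(i <- ins) nth 0 ds i).+1
  end.

Definition wire_depths (ninp : nat) (gs : seq gate) : seq nat :=
  foldl (fun ds g => ds ++ gate_depth ds g) (nseq ninp 0%N) gs.

Definition input_len (N : nat) (C : circuit) : nat := (n_of N * n_of N + n_of N + nrand C)%N.

Definition circuit_depth (N : nat) (C : circuit) : nat :=
  \max_(o <- outs C) nth 0 (wire_depths (input_len N C) (gates C)) o.

Definition gate_size (g : gate) : nat :=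
  match g with GBool _ _ _ => 3 | GOracle _ ins => (size ins).+1 end.

Definition circuit_size (C : circuit) : nat :=
  (nrand C + \sum_(g <- gates C) gate_size g + size (outs C))%N.

Definition encode (N : nat) (A : adjmat N) (b : bitvec N) (r : seq bool) : seq bool :=
  [seq A u v | u <- enum 'I_(N * N), v <- enum 'I_(N * N)]
  ++ [seq b u | u <- enum 'I_(N * N)] ++ r.

Definition circ_output (C : circuit) (O : oracle) (inp : seq bool) : seq bool :=
  map (nth false (eval_wires O inp (gates C))) (outs C).

Definition circ_prob (N : nat) (C : circuit) (O : oracle) (A : adjmat N) (b z : bitvec N)
  : algC :=
  (#|[set r : (nrand C).-tuple bool |
        circ_output C O (encode A b r) == [seq z u | u <- enum 'I_(N * N)]]|)%:R
  / (2 ^ nrand C)%:R.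

(* Over GF(2) put M = A + diag b. Expanding the graph state, the amplitude of
   outcome z is 2^-n sum_x w(x) (-1)^(z.x) for a phase w with
   w(x + y) = w(x) w(y) (-1)^(x.My), so the probability of z is
   2^-n sum_(y in ker M) w(y) (-1)^(z.y). On ker M the summand is a character,
   hence this sum is 0 or |ker M|, and it does not change under z |-> z + Mw.
   So one outcome s of nonzero probability determines the whole distribution:
   it is uniform on the coset s + im M. A RelHLF oracle provides such an s,
   and the circuit outputs s + Mr for uniformly random r; on a grid each bit of
   Mr depends on at most five products of input bits, whence constant depth. *)

From mathcomp Require Import all_boot all_order all_algebra all_field.
From mathcomp Require Import ring zify.
From Stdlib Require Import FunctionalExtensionality.
Import GRing.Theory Num.Theory.

Set Implicit Arguments.
Unset Strict Implicit.
Unset Printing Implicit Defensive.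

Lemma prod_ord_pairs (R : comPzRingType) n (F : 'I_n -> 'I_n -> R) :
  (forall u, F u u = 1%R) ->
  (\prod_u \prod_v F u v = \prod_(u : 'I_n) \prod_(v : 'I_n | (u < v)%N) (F u v * F v u))%R.
Proof.
move=> F1.
have split_diag u : (\prod_v F u v =
    \prod_(v : 'I_n | (u < v)%N) F u v * \prod_(v : 'I_n | (v < u)%N) F u v)%R.
  rewrite (bigID (fun v : 'I_n => (u < v)%N)) /=; congr (_ * _)%R.
  rewrite (bigID (fun v : 'I_n => (v < u)%N)) /= [X in (_ * X)%R]big1 ?mulr1.
    by apply: eq_bigl => v; case: ltngtP.
  move=> v; rewrite -!leqNgt => /andP [vu uv].
  by rewrite (_ : v = u) ?F1 //; apply/val_inj/anti_leq; rewrite vu.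
rewrite (eq_bigr _ (fun u _ => split_diag u)) big_split /=.
rewrite [X in (_ * X)%R](exchange_big_dep xpredT) //= -big_split /=.
by apply: eq_bigr => u _; rewrite big_split.
Qed.

Section QuadraticPhase.
Local Open Scope ring_scope.
Variables (n : nat) (A : 'I_n -> 'I_n -> bool) (b : 'I_n -> bool).
Hypothesis symA : forall u v, A u v = A v u.
Hypothesis irrA : forall u, A u u = false.

Local Notation bits := {ffun 'I_n -> bool}.

Definition xorv (x y : 'I_n -> bool) : bits := [ffun u => x u (+) y u].
Definition zerov : bits := [ffun => false].

Definition chi (z x : 'I_n -> bool) : algC := \prod_u (-1) ^+ (z u && x u).

(* y |-> (A + diag b) y over GF(2) *)
Definition mulM (y : 'I_n -> bool) : bits :=
  [ffun u => (b u && y u) (+) \big[addb/false]_v (A u v && y v)].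

Definition phase (x : 'I_n -> bool) : algC :=
  \prod_u 'i ^+ (b u && x u) *
  \prod_(u : 'I_n) \prod_(v : 'I_n | (u < v)%N && A u v) (-1) ^+ (x u && x v).

Lemma xorvK x : cancel (fun y : bits => xorv x y) (fun y : bits => xorv x y).
Proof. by move=> y; apply/ffunP => u; rewrite !ffunE addKb. Qed.

Lemma xorvA (x y z : 'I_n -> bool) : xorv x (xorv y z) = xorv (xorv x y) z.
Proof. by apply/ffunP => u; rewrite !ffunE addbA. Qed.

Lemma xor0v (x : bits) : xorv zerov x = x.
Proof. by apply/ffunP => u; rewrite !ffunE. Qed.

Lemma xorv_eql (x y : bits) : (xorv x y == x) = (y == zerov).
Proof.
apply/eqP/eqP => [/ffunP xyx|->]; apply/ffunP => u; last by rewrite !ffunE addbF.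
by move: (xyx u); rewrite !ffunE; case: (x u); case: (y u).
Qed.

Lemma chiC z x : chi z x = chi x z.
Proof. by apply: eq_bigr => u _; rewrite andbC. Qed.

Lemma chi_xorv z x y : chi z (xorv x y) = chi z x * chi z y.
Proof.
rewrite /chi -big_split; apply: eq_bigr => u _ /=.
by rewrite ffunE -signr_addb; case: (z u).
Qed.

Lemma chi0 z : chi z zerov = 1.
Proof. by rewrite /chi big1 // => u _; rewrite ffunE andbF. Qed.

Lemma chiMK z x : chi z x * chi z x = 1.
Proof. by rewrite /chi -big_split big1 // => u _ /=; rewrite -signr_addb addbb. Qed.

Lemma conj_chi z x : (chi z x)^* = chi z x.
Proof. by rewrite rmorph_prod; apply: eq_bigr => u _; rewrite rmorph_sign. Qed.

Lemma sum_chi (w : bits) : \sum_(x : bits) chi x w = (w == zerov)%:R * 2%:R ^+ n.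
Proof.
rewrite /chi -(bigA_distr_bigA (fun u c => (-1) ^+ (c && w u))) /=.
have [->|w_nz] := eqVneq w zerov.
  rewrite mul1r -[in RHS](card_ord n) -prodr_const.
  by apply: eq_bigr => u _; rewrite big_bool ffunE.
have [u wu] : exists u, w u.
  apply/existsP; apply: contraNT w_nz => /existsPn w0.
  by apply/eqP/ffunP => u; rewrite ffunE (negbTE (w0 u)).
by rewrite mul0r (bigD1 u) //= big_bool /= wu addNr mul0r.
Qed.

Lemma mulM_xorv x y : mulM (xorv x y) = xorv (mulM x) (mulM y).
Proof.
apply/ffunP => u; rewrite !ffunE.
have -> : \big[addb/false]_v (A u v && xorv x y v) =
    \big[addb/false]_v (A u v && x v) (+) \big[addb/false]_v (A u v && y v).
  by rewrite -big_split; apply: eq_bigr => v _; rewrite ffunE; case: (A u v).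
move: (\big[addb/false]__ _) (\big[addb/false]__ _) => p q.
by case: (b u); case: (x u); case: (y u); case: p; case: q.
Qed.

Lemma mulM0 : mulM zerov = zerov.
Proof. by apply/ffunP => u; rewrite !ffunE andbF big1 // => v _; rewrite ffunE andbF. Qed.

Lemma sign_and_sum c (f : 'I_n -> bool) :
  (-1) ^+ (c && \big[addb/false]_v f v) = \prod_v (-1) ^+ (c && f v) :> algC.
Proof.
apply: (big_morph (fun d => (-1) ^+ (c && d))); last by rewrite andbF.
by move=> d e; rewrite -signr_addb; case: c.
Qed.

Lemma chi_mulME x y : chi x (mulM y) =
  \prod_u (-1) ^+ (x u && b u && y u) * \prod_u \prod_v (-1) ^+ (x u && A u v && y v).
Proof.
rewrite /chi -big_split; apply: eq_bigr => u _ /=.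
rewrite ffunE andb_addr signr_addb sign_and_sum andbA.
by congr (_ * _); apply: eq_bigr => v _; rewrite andbA.
Qed.

Lemma chi_mulMC x y : chi x (mulM y) = chi y (mulM x).
Proof.
rewrite !chi_mulME; congr (_ * _).
  by apply: eq_bigr => u _; case: (x u); case: (y u); rewrite ?andbF.
rewrite exchange_big; apply: eq_bigr => u _; apply: eq_bigr => v _.
by rewrite symA; case: (x v); case: (y u); rewrite ?andbF.
Qed.

Lemma phase_xorv x y : phase (xorv x y) = phase x * phase y * chi x (mulM y).
Proof.
have diag_part : \prod_u 'i ^+ (b u && xorv x y u) =
    \prod_u 'i ^+ (b u && x u) * \prod_u 'i ^+ (b u && y u) *
    \prod_u (-1) ^+ (x u && b u && y u) :> algC.
  rewrite -!big_split; apply: eq_bigr => u _ /=; rewrite ffunE.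
  case: (b u); case: (x u); case: (y u); rewrite //= ?mulr1 ?mul1r //.
  by rewrite expr0 !expr1 -expr2 sqrCi mulrNN mulr1.
have edge_part :
    \prod_(u : 'I_n) \prod_(v : 'I_n | (u < v)%N && A u v) (-1) ^+ (xorv x y u && xorv x y v) =
    \prod_(u : 'I_n) \prod_(v : 'I_n | (u < v)%N && A u v) (-1) ^+ (x u && x v) *
    \prod_(u : 'I_n) \prod_(v : 'I_n | (u < v)%N && A u v) (-1) ^+ (y u && y v) *
    \prod_u \prod_v (-1) ^+ (x u && A u v && y v) :> algC.
  rewrite (prod_ord_pairs (F := fun u v => (-1) ^+ (x u && A u v && y v))); last first.
    by move=> u; rewrite irrA andbF.
  rewrite -!big_split; apply: eq_bigr => u _ /=.
  rewrite [LHS]big_mkcond [X in _ = X * _ * _]big_mkcond.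
  rewrite [X in _ = _ * X * _]big_mkcond [X in _ = _ * _ * X]big_mkcond -!big_split /=.
  apply: eq_bigr => v _; rewrite (symA v u) !ffunE.
  case: (u < v)%N; case: (A u v); rewrite ?andbF ?mulr1 //= -!signr_addb.
  by case: (x u); case: (x v); case: (y u); case: (y v).
rewrite /phase chi_mulME diag_part edge_part; ring.
Qed.

Lemma phase_unit x : phase x * (phase x)^* = 1.
Proof.
have i_unit (c : bool) : 'i ^+ c * ('i ^+ c)^* = 1 :> algC.
  by case: c; rewrite ?expr0 ?expr1 ?rmorph1 ?mulr1 // conjCi mulrN -expr2 sqrCi opprK.
rewrite /phase rmorphM /= !rmorph_prod mulrACA -!big_split big1 // => u _ /=.
rewrite i_unit mul1r rmorph_prod -big_split big1 // => v _ /=.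
by rewrite rmorph_sign -signr_addb addbb.
Qed.

Lemma phase0 : phase zerov = 1.
Proof.
rewrite /phase !big1 ?mulr1 // => u _; first by rewrite big1 // => v _; rewrite ffunE.
by rewrite ffunE andbF.
Qed.

Definition kerM := [set y : bits | mulM y == zerov].

Definition ksum (z : 'I_n -> bool) : algC := \sum_(y in kerM) phase y * chi z y.

Lemma ksum_0_or_card z : ksum z = 0 \/ ksum z = #|kerM|%:R.
Proof.
pose h y := phase y * chi z y.
have h_mul y y' : y' \in kerM -> h (xorv y y') = h y * h y'.
  by rewrite inE => /eqP My'; rewrite /h phase_xorv chi_xorv My' chi0 mulr1; ring.
have [h1|] := boolP [forall y in kerM, h y == 1].
  right; rewrite /ksum (eq_bigr (fun _ => 1)) ?sumr_const // => y ky.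
  exact/eqP/(forall_inP h1).
case/forall_inPn => y0 ky0 hy0; left.
have ksum_h : ksum z = h y0 * ksum z.
  have My0 : mulM y0 = zerov by move: ky0; rewrite inE => /eqP.
  rewrite /ksum [LHS](reindex_inj (can_inj (xorvK y0))) mulr_sumr /=.
  have kerM_xorv (y : bits) : (xorv y0 y \in kerM) = (y \in kerM).
    by rewrite !inE mulM_xorv My0 xor0v.
  by apply: eq_big => [y|y]; rewrite kerM_xorv // => ky; exact: h_mul.
have : ksum z * (1 - h y0) = 0 by rewrite mulrBr mulr1 {1}ksum_h mulrC subrr.
by move/eqP; rewrite mulf_eq0 subr_eq0 [1 == _]eq_sym (negbTE hy0) orbF => /eqP.
Qed.

Lemma ksum_xorv_mulM z w : ksum (xorv z (mulM w)) = ksum z.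
Proof.
apply: eq_bigr => y; rewrite inE => /eqP My; congr (_ * _).
by rewrite chiC chi_xorv -chi_mulMC My chi0 mulr1 chiC.
Qed.

Lemma norm_phase_sum z :
  (\sum_(x : bits) phase x * chi z x) * (\sum_(x : bits) phase x * chi z x)^* =
  2%:R ^+ n * ksum z.
Proof.
rewrite rmorph_sum mulr_suml /=; under eq_bigr do rewrite mulr_sumr.
have shift (x' : bits) :
    \sum_(x : bits) phase x * chi z x * (phase x' * chi z x')^* =
    \sum_(y : bits) phase y * chi z y * chi x' (mulM y).
  rewrite (reindex_inj (can_inj (xorvK x'))) /=; apply: eq_bigr => y _.
  rewrite phase_xorv chi_xorv rmorphM /= conj_chi.
  have -> : phase x' * phase y * chi x' (mulM y) * (chi z x' * chi z y) *
      ((phase x')^* * chi z x') = (phase x' * (phase x')^*) *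
      (chi z x' * chi z x') * (phase y * chi z y * chi x' (mulM y)) by ring.
  by rewrite phase_unit chiMK !mul1r.
rewrite exchange_big /=; under eq_bigr do rewrite shift.
rewrite exchange_big /= /ksum mulr_sumr [RHS]big_mkcond /=.
apply: eq_bigr => y _; rewrite -mulr_sumr sum_chi inE.
by case: (_ == _); rewrite ?(mul1r, mul0r, mulr0) // mulrC.
Qed.

Definition fiber (s : 'I_n -> bool) (z : bits) := #|[set r : bits | xorv s (mulM r) == z]|.

Lemma fiber_xorv_mulM s w : fiber s (xorv s (mulM w)) = #|kerM|.
Proof.
rewrite /fiber -!sum1_card (reindex_inj (can_inj (xorvK w))) /=.
by apply: eq_bigl => r; rewrite !inE mulM_xorv xorvA xorv_eql.
Qed.

Lemma sum_fiber s : \sum_(z : bits) fiber s z = (2 ^ n)%N.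
Proof.
rewrite /fiber; under eq_bigr do rewrite -sum1_card big_mkcond /=.
rewrite exchange_big /= -[in RHS](card_ord n) -card_bool -card_ffun -sum1_card.
apply: eq_bigr => r _; rewrite -big_mkcond /=.
by rewrite (big_pred1 (xorv s (mulM r))) // => z; rewrite !inE eq_sym.
Qed.

End QuadraticPhase.

Arguments zerov {n}.

Section OutcomeDistribution.
Local Open Scope ring_scope.
Variables (N : nat) (A : adjmat N) (b : bitvec N).
Local Notation n := (N * N)%N.
Local Notation bits := {ffun 'I_n -> bool}.

Lemma Umx_b2o bi zc xc :
  Umx bi (b2o zc) (b2o xc) = (sqrtC 2)^-1 * ((-1) ^+ (zc && xc) * 'i ^+ (bi && xc)).
Proof.
rewrite /Umx; case: bi; last by case: zc; case: xc; rewrite !mxE /= ?mulr1.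
rewrite !mxE big_ord_recl big_ord1 /Hmx /Rzmx !mxE.
by case: zc; case: xc; rewrite /= ?mulr1 ?mulr0 ?addr0 ?add0r ?mulrA // /bump /= ?expr0 ?mulr1.
Qed.

Lemma outcome_amp_phase z :
  outcome_amp A b z = 2^-1 ^+ n * \sum_(x : bits) phase A b x * chi z x.
Proof.
have sqrt2_inv : (sqrtC 2)^-1 ^+ n * (sqrtC 2)^-1 ^+ n = 2^-1 ^+ n :> algC.
  by rewrite -exprMn -invfM -expr2 sqrtCK.
rewrite /outcome_amp mulr_sumr; apply: eq_bigr => x _.
under eq_bigr do rewrite Umx_b2o.
rewrite big_split /= prodr_const card_ord big_split /= /graph_amp /phase /chi -sqrt2_inv.
ring.
Qed.

Hypotheses (symA : forall u v, A u v = A v u) (irrA : forall u, A u u = false).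

Lemma outcome_prob_ksum z : outcome_prob A b z = 2^-1 ^+ n * ksum A b z.
Proof.
rewrite /outcome_prob normCK outcome_amp_phase rmorphM rmorphXn fmorphV /= conjC_nat.
by rewrite mulrACA norm_phase_sum // mulrA -!exprMn mulfVK ?pnatr_eq0.
Qed.

Lemma sum_outcome_prob : \sum_(z : bits) outcome_prob A b z = 1.
Proof.
under eq_bigr do rewrite outcome_prob_ksum.
rewrite -mulr_sumr exchange_big /=.
under eq_bigr do rewrite -mulr_sumr sum_chi.
rewrite (bigD1 zerov) ?inE ?mulM0 //= big1 ?addr0 => [|y /andP [_ /negbTE ->]]; last first.
  by rewrite mul0r mulr0.
by rewrite phase0 eqxx !mul1r -exprMn mulVf ?pnatr_eq0 // expr1n.
Qed.

Theorem outcome_prob_fiber s : outcome_prob A b s != 0 ->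
  forall z : bitvec N, outcome_prob A b z = (fiber A b s [ffun u => z u])%:R / (2 ^ n)%:R.
Proof.
move=> ps z.
suff fiber_law (y : bits) : outcome_prob A b y = (fiber A b s y)%:R / (2 ^ n)%:R.
  rewrite -fiber_law; congr outcome_prob.
  by apply: functional_extensionality => u; rewrite ffunE.
have ksum_s : ksum A b s = #|kerM A b|%:R.
  case: (ksum_0_or_card b symA irrA s) => // ks0.
  by move: ps; rewrite outcome_prob_ksum ks0 mulr0 eqxx.
have on_coset w : let x := xorv s (mulM A b w) in
    outcome_prob A b x = (fiber A b s x)%:R / (2 ^ n)%:R.
  rewrite /= fiber_xorv_mulM outcome_prob_ksum (ksum_xorv_mulM _ symA) ksum_s.
  by rewrite natrX exprVn mulrC.
(* Termwise lower bound plus equal totals (both distributions sum to 1). *)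
have le_prob (x : bits) : (fiber A b s x)%:R / (2 ^ n)%:R <= outcome_prob A b x.
  have [fx0|] := eqVneq (fiber A b s x) 0%N.
    by rewrite fx0 mul0r /outcome_prob exprn_ge0.
  rewrite -lt0n => /card_gt0P [w]; rewrite inE => /eqP <-.
  by rewrite on_coset.
have sum_diff : \sum_(z : bits) (outcome_prob A b z - (fiber A b s z)%:R / (2 ^ n)%:R) = 0.
  rewrite sumrB sum_outcome_prob -mulr_suml -natr_sum sum_fiber.
  by rewrite mulfV ?subrr // pnatr_eq0 expn_eq0.
apply/eqP; rewrite -subr_eq0; apply/eqP.
by apply: (psumr_eq0P _ sum_diff) => // x _; rewrite subr_ge0.
Qed.

End OutcomeDistribution.

Lemma nth_allpairs (S T R : Type) (f : S -> T -> R) (s : seq S) (t : seq T) x0 y0 z0 i j :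
  i < size s -> j < size t ->
  nth z0 [seq f x y | x <- s, y <- t] (i * size t + j) = f (nth x0 s i) (nth y0 t j).
Proof.
elim: s i => // x s IH [|i] /= Hi Hj; rewrite nth_cat size_map.
  by rewrite mul0n add0n Hj (nth_map y0).
by rewrite mulSn -addnA ltnNge leq_addr /= addKn IH.
Qed.

Definition is_bool_gate (g : gate) := if g is GBool _ _ _ then true else false.

Section BoolRun.
Variables (T : Type) (x0 : T) (h : (bool -> bool -> bool) -> T -> T -> T).

Definition bool_gate_out (vals : seq T) (g : gate) : seq T :=
  if g is GBool f p q then [:: h f (nth x0 vals p) (nth x0 vals q)] else [:: x0].

Definition run_bool (vals : seq T) (gs : seq gate) : seq T :=
  foldl (fun acc g => acc ++ bool_gate_out acc g) vals gs.

Lemma run_bool_cat vals gs1 gs2 :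
  run_bool vals (gs1 ++ gs2) = run_bool (run_bool vals gs1) gs2.
Proof. exact: foldl_cat. Qed.

Lemma size_run_bool vals gs : size (run_bool vals gs) = size vals + size gs.
Proof.
elim: gs vals => [|g gs IH] vals /=; first by rewrite addn0.
by rewrite IH size_cat; case: g => * /=; rewrite addn1 addSnnS.
Qed.

Lemma nth_run_bool_prefix vals gs i :
  i < size vals -> nth x0 (run_bool vals gs) i = nth x0 vals i.
Proof.
elim: gs vals => //= g gs IH vals i_lt.
by rewrite IH ?nth_cat ?i_lt // size_cat ltn_addr.
Qed.

Lemma nth_run_bool_gate vals gs k g0 f p q :
  k < size gs -> nth g0 gs k = GBool f p q ->
  p < size vals + k -> q < size vals + k ->
  nth x0 (run_bool vals gs) (size vals + k) =
  h f (nth x0 (run_bool vals gs) p) (nth x0 (run_bool vals gs) q).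
Proof.
move=> k_lt gk p_lt q_lt.
have size_take : size (run_bool vals (take k gs)) = size vals + k.
  by rewrite size_run_bool size_take k_lt.
have -> : gs = take k gs ++ GBool f p q :: drop k.+1 gs.
  by rewrite -gk -drop_nth ?cat_take_drop.
rewrite run_bool_cat /=; set V := run_bool vals (take k gs).
have in_V i : i <= size vals + k -> i < size (V ++ [:: h f (nth x0 V p) (nth x0 V q)]).
  by rewrite size_cat size_take addn1 ltnS.
rewrite (nth_run_bool_prefix _ (in_V _ (leqnn _))) (nth_run_bool_prefix _ (in_V _ (ltnW p_lt))).
rewrite (nth_run_bool_prefix _ (in_V _ (ltnW q_lt))).
by rewrite !nth_cat size_take ltnn subnn p_lt q_lt.
Qed.

Lemma foldl_run_bool (F : seq T -> gate -> seq T) vals gs :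
  all is_bool_gate gs -> (forall acc g, is_bool_gate g -> F acc g = bool_gate_out acc g) ->
  foldl (fun acc g => acc ++ F acc g) vals gs = run_bool vals gs.
Proof.
elim: gs vals => //= g gs IH vals /andP [bg bgs] F_bool.
by rewrite F_bool // IH.
Qed.

End BoolRun.

Definition nbrs (N u : nat) : seq nat := [seq v <- iota 0 (N * N) | grid_adj N u v].

Lemma grid_adj_cand N u v : grid_adj N u v -> v \in [:: u.+1; u.-1; u + N; u - N].
Proof.
rewrite /grid_adj !inE.
have := divn_eq u N; have := divn_eq v N.
move: (u %/ N) (u %% N) (v %/ N) (v %% N) => a c a' c' ev eu.
case/orP => /andP [/eqP e /orP [] /eqP e'].
- by apply/orP; left; apply/eqP; lia.
- by apply/orP; right; apply/orP; left; apply/eqP; lia.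
- by do 2 (apply/orP; right); apply/orP; left; apply/eqP; subst; nia.
- by do 3 (apply/orP; right); apply/eqP; subst; nia.
Qed.

Lemma size_nbrs N u : size (nbrs N u) <= 4.
Proof.
apply: (@leq_trans (size [:: u.+1; u.-1; u + N; u - N])) => //.
apply: uniq_leq_size; first by rewrite filter_uniq // iota_uniq.
by move=> v; rewrite mem_filter => /andP [/grid_adj_cand].
Qed.

Lemma nth_nbrs_lt N u j : j < size (nbrs N u) -> nth 0 (nbrs N u) j < N * N.
Proof.
by move/(mem_nth 0); rewrite mem_filter mem_iota add0n => /andP [_ /andP [_]].
Qed.

Definition nbr_term N (A : adjmat N) (g : 'I_(N * N) -> bool) (u : 'I_(N * N)) j :=
  let v := insubd u (nth 0 (nbrs N u) j) in [&& j < size (nbrs N u), A u v & g v].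

Lemma big_addb_nbrs N (A : adjmat N) (g : 'I_(N * N) -> bool) (u : 'I_(N * N)) :
  (forall v, A u v -> grid_adj N u v) ->
  \big[addb/false]_v (A u v && g v) = \big[addb/false]_(j < 4) nbr_term A g u j.
Proof.
move=> A_grid; pose G v := A u (insubd u v) && g (insubd u v).
have -> : \big[addb/false]_v (A u v && g v) = \big[addb/false]_(v < N * N | grid_adj N u v) G v.
  rewrite [RHS]big_mkcond /=; apply: eq_bigr => v _; rewrite /G valKd.
  case: (boolP (grid_adj N u v)) => // not_adj.
  by case: (boolP (A u v)) => // /A_grid; rewrite (negbTE not_adj).
rewrite -big_mkord -big_filter.
have -> : [seq v <- index_iota 0 (N * N) | grid_adj N u v] = nbrs N u.
  by rewrite /index_iota subn0.
rewrite (big_nth 0) -(big_mkord xpredT).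
rewrite [RHS](big_cat_nat (leq0n _) (size_nbrs N u)) /= [X in _ = addb _ X]big1_seq ?addbF.
  by rewrite !big_nat; apply: eq_bigr => j /andP [_ j_lt]; rewrite /nbr_term j_lt.
by move=> j /andP [_]; rewrite mem_index_iota /nbr_term => /andP [/leq_gtF ->].
Qed.

Lemma eq_map_enum (T : eqType) m (f g : 'I_m -> T) :
  ([seq f u | u <- enum 'I_m] == [seq g u | u <- enum 'I_m]) = ([ffun u => f u] == [ffun u => g u]).
Proof.
apply/eqP/eqP => [fg|/ffunP fg]; last by apply/eq_map => u; have := fg u; rewrite !ffunE.
move/eq_in_map: fg => fg; apply/ffunP => u; rewrite !ffunE.
by apply: fg; rewrite mem_enum.
Qed.

Section HLFCircuit.
Variable N : nat.
Local Notation n := (N * N).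

(* Wires are numbered as in [eval_wires]: the inputs of [encode] (A row-major,
   b, then the n random bits r), the n oracle answers s, then the gates. *)
Definition ninputs := n * n + n + n.
Definition wire_A u v := u * n + v.
Definition wire_b u := n * n + u.
Definition wire_r u := n * n + n + u.
Definition wire_s u := ninputs + u.
Definition wire_g u k := ninputs + n + (u * 10 + k).

Definition const_false := GBool (fun _ _ => false) 0 0.

(* Vertex u owns the ten gates [wire_g u k]: the even ones compute the terms
   b_u r_u and A_uv r_v (v ranging over the at most four grid neighbours of u),
   the odd ones XOR them one by one onto the oracle bit s_u. *)
Definition term_gate u j :=
  if j is j'.+1 then
    let v := nth 0 (nbrs N u) j' in
    if j' < size (nbrs N u) then GBool andb (wire_A u v) (wire_r v) else const_false
  else GBool andb (wire_b u) (wire_r u).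

Definition acc_gate u j :=
  GBool addb (if j is j'.+1 then wire_g u j'.*2.+1 else wire_s u) (wire_g u j.*2).

Definition block_gate u k := if odd k then acc_gate u k./2 else term_gate u k./2.

Definition hlf_gates := mkseq (fun i => block_gate (i %/ 10) (i %% 10)) (n * 10).

Definition hlf_circuit :=
  Circuit n (GOracle N (iota 0 (n * n + n)) :: hlf_gates) [seq wire_g u 9 | u <- iota 0 n].

Lemma hlf_gates_bool : all is_bool_gate hlf_gates.
Proof.
rewrite /hlf_gates /mkseq all_map; apply/allP => i _ /=.
rewrite /block_gate /acc_gate /term_gate.
by case: odd => //; case: (_./2) => // j; case: ifP.
Qed.

Lemma nth_hlf_gates g0 u k : u < n -> k < 10 -> nth g0 hlf_gates (u * 10 + k) = block_gate u k.
Proof.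
move=> u_lt k_lt; rewrite nth_mkseq; last by nia.
by rewrite divnMDl // modnMDl divn_small // modn_small // addn0.
Qed.

Section BlockRun.
Variables (T : Type) (x0 : T) (h : (bool -> bool -> bool) -> T -> T -> T) (vals : seq T).
Hypothesis size_vals : size vals = ninputs + n.
Local Notation w i := (nth x0 (run_bool x0 h vals hlf_gates) i).

Lemma run_block u k f p q : u < n -> k < 10 -> block_gate u k = GBool f p q ->
  p < wire_g u k -> q < wire_g u k -> w (wire_g u k) = h f (w p) (w q).
Proof.
move=> u_lt k_lt gk; rewrite /wire_g -size_vals => p_lt q_lt.
apply: (nth_run_bool_gate _ _ (g0 := const_false)) => //.
  by rewrite size_mkseq; nia.
by rewrite nth_hlf_gates.
Qed.

Lemma run_term0 u : u < n -> w (wire_g u 0) = h andb (w (wire_b u)) (w (wire_r u)).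
Proof. by move=> u_lt; apply: run_block => //; rewrite /wire_g /wire_b /wire_r /ninputs; lia. Qed.

Lemma run_termS u j : u < n -> j < 4 ->
  w (wire_g u j.+1.*2) =
    let v := nth 0 (nbrs N u) j in
    if j < size (nbrs N u) then h andb (w (wire_A u v)) (w (wire_r v))
    else h (fun _ _ => false) (w 0) (w 0).
Proof.
move=> u_lt j_lt /=; have k_lt : j.+1.*2 < 10 by rewrite -muln2; lia.
have gk : block_gate u j.+1.*2 = term_gate u j.+1 by rewrite /block_gate odd_double doubleK.
case: ifP => [j_nbr|j_far]; apply: run_block => //; rewrite ?gk /term_gate ?j_nbr ?j_far //.
all: rewrite /wire_g /ninputs; try lia.
all: have := nth_nbrs_lt j_nbr; rewrite /wire_A /wire_r; nia.
Qed.

Lemma run_acc u j : u < n -> j < 5 ->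
  w (wire_g u j.*2.+1) =
    h addb (if j is j'.+1 then w (wire_g u j'.*2.+1) else w (wire_s u)) (w (wire_g u j.*2)).
Proof.
move=> u_lt j_lt; have k_lt : j.*2.+1 < 10 by rewrite -muln2; lia.
have gk : block_gate u j.*2.+1 = acc_gate u j by rewrite /block_gate /= odd_double /= uphalf_double.
rewrite (run_block u_lt k_lt gk); case: j {j_lt k_lt gk} => [|j] //; rewrite /wire_g /wire_s -!muln2; lia.
Qed.

End BlockRun.

Lemma wire_A_lt u v : u < n -> v < n -> wire_A u v < n * n.
Proof.
move=> u_lt v_lt; rewrite /wire_A (leq_trans (_ : _ < u.+1 * n)) ?leq_mul2r ?u_lt ?orbT //.
by rewrite mulSn addnC ltn_add2r.
Qed.

Section Evaluation.
Variables (O : oracle) (A : adjmat N) (b : bitvec N) (r : n.-tuple bool).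
Local Notation inp := (encode A b r).

Lemma size_encode : size inp = ninputs.
Proof.
by rewrite /encode !size_cat size_allpairs size_map size_tuple !size_enum_ord addnA.
Qed.

Lemma nth_encode_A (u v : 'I_n) : nth false inp (wire_A u v) = A u v.
Proof.
rewrite /encode nth_cat size_allpairs size_enum_ord wire_A_lt ?ltn_ord // /wire_A.
have := @nth_allpairs _ _ _ A (enum 'I_n) (enum 'I_n) u v false u v.
by rewrite size_enum_ord !nth_ord_enum => ->.
Qed.

Lemma nth_encode_b (u : 'I_n) : nth false inp (wire_b u) = b u.
Proof.
rewrite /encode nth_cat size_allpairs size_enum_ord ltnNge leq_addr /= addKn.
by rewrite nth_cat size_map size_enum_ord ltn_ord (nth_map u) ?size_enum_ord // nth_ord_enum.
Qed.

Lemma nth_encode_r (u : 'I_n) : nth false inp (wire_r u) = tnth r u.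
Proof.
rewrite /encode /wire_r nth_cat size_allpairs size_enum_ord ltnNge -addnA leq_addr /= addKn.
by rewrite nth_cat size_map size_enum_ord ltnNge leq_addr /= addKn (tnth_nth false).
Qed.

Lemma eval_hlf_circuit : eval_wires O inp (gates hlf_circuit) =
  run_bool false (fun f => f) (inp ++ [seq O A b u | u <- enum 'I_n]) hlf_gates.
Proof.
have query_E : map (nth false inp) (iota 0 (n * n + n)) = take (n * n + n) inp.
  apply: (@eq_from_nth _ false) => [|i]; rewrite size_map size_iota.
    by rewrite size_takel // size_encode /ninputs leq_addr.
  by move=> i_lt; rewrite (nth_map 0) ?size_iota // nth_iota // nth_take.
have decA_E : @decA N (take (n * n + n) inp) = A.
  apply: functional_extensionality => u; apply: functional_extensionality => v.
  have [u_lt v_lt] := (ltn_ord u, ltn_ord v).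
  by rewrite /decA /n_of nth_take -/(wire_A u v) ?nth_encode_A // ltn_addr // wire_A_lt ?ltn_ord.
have decb_E : @decb N (take (n * n + n) inp) = b.
  apply: functional_extensionality => u.
  by rewrite /decb /n_of nth_take -/(wire_b u) ?nth_encode_b // ltn_add2l.
rewrite /eval_wires /= query_E decA_E decb_E.
by apply: foldl_run_bool hlf_gates_bool _ => acc [].
Qed.

Hypothesis A_grid : forall u v, A u v -> grid_adj N u v.
Local Notation vals := (encode A b r ++ [seq O A b u | u <- enum 'I_n]).
Local Notation w i := (nth false (run_bool false (fun f => f) vals hlf_gates) i).

Lemma size_vals : size vals = ninputs + n.
Proof. by rewrite size_cat size_encode size_map size_enum_ord. Qed.

Lemma wire_input i : i < ninputs -> w i = nth false (encode A b r) i.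
Proof.
move=> i_lt; rewrite nth_run_bool_prefix ?size_vals ?(ltn_addr _ i_lt) //.
by rewrite nth_cat size_encode i_lt.
Qed.

Lemma wire_oracle (u : 'I_n) : w (wire_s u) = O A b u.
Proof.
rewrite nth_run_bool_prefix ?size_vals /wire_s ?ltn_add2l // nth_cat size_encode.
by rewrite ltnNge leq_addr /= addKn (nth_map u) ?size_enum_ord // nth_ord_enum.
Qed.

Lemma wire_term_nbr (u : 'I_n) j : j < 4 -> w (wire_g u j.+1.*2) = nbr_term A (tnth r) u j.
Proof.
move=> j_lt; rewrite (run_termS _ _ size_vals (ltn_ord u) j_lt) /nbr_term /=.
case: ifP => [j_nbr|_] //=.
set v := insubd u _; have v_E : nth 0 (nbrs N u) j = v by rewrite insubdK //; exact: nth_nbrs_lt.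
rewrite v_E !wire_input ?nth_encode_A ?nth_encode_r //.
  by rewrite /wire_r /ninputs ltn_add2l.
by rewrite /ninputs -addnA ltn_addr // wire_A_lt ?ltn_ord.
Qed.

Lemma wire_acc (u : 'I_n) j : j < 5 -> w (wire_g u j.*2.+1) =
  O A b u (+) (b u && tnth r u) (+) \big[addb/false]_(i < j) nbr_term A (tnth r) u i.
Proof.
elim: j => [|j IH] j_lt; rewrite (run_acc _ _ size_vals (ltn_ord u) j_lt).
  rewrite big_ord0 addbF wire_oracle (run_term0 _ _ size_vals (ltn_ord u)).
  rewrite !wire_input ?nth_encode_b ?nth_encode_r // /wire_b /wire_r /ninputs.
    by rewrite ltn_add2l.
  by rewrite -addnA ltn_add2l ltn_addr.
by rewrite IH 1?ltnW // wire_term_nbr // big_ord_recr addbA.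
Qed.

Lemma hlf_output : circ_output hlf_circuit O (encode A b r) =
  [seq xorv (O A b) (mulM A b (finfun_of_tuple r)) u | u <- enum 'I_n].
Proof.
rewrite /circ_output eval_hlf_circuit; set S := [seq O A b u | u <- enum 'I_n].
rewrite [outs _]/= -val_enum_ord -!map_comp; apply: eq_map => u /=.
rewrite (wire_acc u (j := 4) isT : w (wire_g u 9) = _) /xorv /mulM !ffunE -addbA.
rewrite -(big_addb_nbrs (tnth r) (@A_grid u)); congr (_ (+) (_ (+) _)).
by apply: eq_bigr => v _; rewrite ffunE.
Qed.

End Evaluation.

Section Probability.
Variables (O : oracle) (A : adjmat N) (b : bitvec N).
Hypothesis A_grid : forall u v, A u v -> grid_adj N u v.

Lemma circ_prob_hlf (z : bitvec N) :
  circ_prob hlf_circuit O A b z = ((fiber A b (O A b) [ffun u => z u])%:R / (2 ^ n)%:R)%R.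
Proof.
rewrite /circ_prob /fiber; congr (_%:R / _)%R.
have tuple_bij : bijective (@finfun_of_tuple bool n).
  by exists tuple_of_finfun; [exact: finfun_of_tupleK | exact: tuple_of_finfunK].
rewrite -!sum1_card (reindex _ (onW_bij _ tuple_bij)) /=.
by apply: eq_bigl => t; rewrite !inE hlf_output // eq_map_enum ffunK.
Qed.

End Probability.

Section Depth.
Local Notation dvals := (nseq ninputs 0 ++ nseq n 1).
Local Notation d i := (nth 0 (run_bool 0 (fun _ p q => (maxn p q).+1) dvals hlf_gates) i).

Lemma size_dvals : size dvals = ninputs + n.
Proof. by rewrite size_cat !size_nseq. Qed.

Lemma wire_depths_hlf : wire_depths (input_len N hlf_circuit) (gates hlf_circuit) =
  run_bool 0 (fun _ p q => (maxn p q).+1) dvals hlf_gates.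
Proof.
rewrite /wire_depths /= big1_seq => [|i _]; last by rewrite nth_nseq if_same.
by apply: foldl_run_bool hlf_gates_bool _ => acc [].
Qed.

Lemma depth_input i : i < ninputs -> d i = 0.
Proof.
move=> i_lt; rewrite nth_run_bool_prefix ?size_dvals ?(ltn_addr _ i_lt) //.
by rewrite nth_cat size_nseq i_lt nth_nseq if_same.
Qed.

Lemma depth_term u j : u < n -> j < 5 -> d (wire_g u j.*2) = 1.
Proof.
move=> u_lt; case: j => [|j] j_lt.
  rewrite (run_term0 _ _ size_dvals u_lt) !depth_input // /wire_b /wire_r /ninputs.
    by rewrite ltn_add2l.
  by rewrite -addnA ltn_add2l ltn_addr.
rewrite (run_termS _ _ size_dvals u_lt j_lt) /=.
case: ifP => [j_nbr|_]; last first.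
  by rewrite depth_input // /ninputs addn_gt0 (leq_ltn_trans _ u_lt) ?orbT.
have v_lt := nth_nbrs_lt j_nbr.
rewrite !depth_input // /ninputs /wire_r ?ltn_add2l //.
by rewrite -addnA ltn_addr ?wire_A_lt.
Qed.

Lemma depth_acc u j : u < n -> j < 5 -> d (wire_g u j.*2.+1) = j.+2.
Proof.
move=> u_lt; elim: j => [|j IH] j_lt; rewrite (run_acc _ _ size_dvals u_lt j_lt).
  rewrite depth_term // nth_run_bool_prefix ?size_dvals /wire_s ?ltn_add2l //.
  by rewrite nth_cat size_nseq ltnNge leq_addr /= addKn nth_nseq u_lt.
by rewrite IH ?depth_term // ltnW.
Qed.

Lemma hlf_depth : circuit_depth N hlf_circuit <= 6.
Proof.
rewrite /circuit_depth wire_depths_hlf; apply/bigmax_leqP_seq => _ /mapP [u u_in ->] _.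
move: u_in; rewrite mem_iota add0n => u_lt.
by rewrite (depth_acc (j := 4) u_lt isT).
Qed.

End Depth.

Lemma hlf_size : circuit_size hlf_circuit <= 34 * N ^ 34 + 34.
Proof.
rewrite /circuit_size big_cons /= size_iota size_map size_iota.
have sum_size_bool gs : all is_bool_gate gs -> \sum_(g <- gs) gate_size g = 3 * size gs.
  elim: gs => [|g gs IH]; first by rewrite big_nil.
  by case: g => // f p q /IH; rewrite big_cons mulnS => ->.
rewrite sum_size_bool ?hlf_gates_bool // size_mkseq.
case: N => [|N'] //; set m := N'.+1.
have n_le : m * m <= m ^ 34 by rewrite mulnn leq_pexp2l.
have nn_le : m * m * (m * m) <= m ^ 34 by rewrite !mulnn -expnM leq_pexp2l.
lia.
Qed.

End HLFCircuit.

Theorem mainTheorem11 :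
  exists (d c : nat) (C : nat -> circuit),
    forall N : nat,
      (circuit_depth N (C N) <= d)%N /\
      (circuit_size (C N) <= c * N ^ c + c)%N /\
      forall O : oracle, solves_RelHLF O ->
      forall (A : adjmat N) (b : bitvec N), valid_instance A ->
      forall z : bitvec N, circ_prob (C N) O A b z = outcome_prob A b z.
Proof.
exists 6, 34, hlf_circuit => N; split; first exact: hlf_depth.
split; first exact: hlf_size.
move=> O solves A b valid z; have s_pos := solves N A b valid.
case: valid => symA [irrA A_grid].
by rewrite circ_prob_hlf // (outcome_prob_fiber symA irrA s_pos).
Qed.
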